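(* For every integer $N\ge 2$, every $\delta<0$ and every $\theta\in\mathbb{R}$, $$\lim_{\beta\to+\infty}E_r(\theta)=\begin{cases}\frac{N^2\theta}{2}\Big(\frac{1}{N-1}+H_N\Big) & \theta<-\delta,\\ N^2\theta H_N & \theta=-\delta,\\ \frac{N^2\theta}{2}\big(1+H_N\big) & \theta>-\delta,\end{cases}\qquad \lim_{\beta\to+\infty}E_p(\theta)=\begin{cases}\frac{N^2\theta}{2}\big(1+H_N\big) & \theta<-\delta,\\ N^2\theta H_N & \theta=-\delta,\\ \frac{N^2\theta}{2}\Big(H_N+\frac{1}{N-1}\Big) & \theta>-\delta.\end{cases}$$
   Context: Fix an integer $N\ge 2$ and $\delta<0$. For $\beta>0$ and $\theta\in\mathbb{R}$ put $x=\beta(\theta+\delta)$; for $1\le i\le N-1$ define $u_{i,i+1}=\frac{i(N-i)}{N^2}(1+e^{-x})^{-1}$, $u_{i,i-1}=\frac{i(N-i)}{N^2}(1+e^{x})^{-1}$, $u_{i,i}=1-u_{i,i+1}-u_{i,i-1}$, $u_{i,j}=0$ for $|i-j|\ge2$; let $U=(u_{ij})_{i,j=1}^{N-1}$, $(n_{ij})_{i,j=1}^{N-1}=(I-U)^{-1}$, and $E_r(\theta)=\frac{\theta}{2}\sum_{i=1}^{N-1}(n_{1i}+n_{N-1,i})\,i$, $E_p(\theta)=\frac{\theta}{2}\sum_{i=1}^{N-1}(n_{1i}+n_{N-1,i})(N-i)$ (these depend on $\beta$). Here $H_N=\sum_{j=1}^{N-1}\frac1j$. *)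

From HB Require Import structures.
From mathcomp Require Import all_boot all_order all_algebra.
From mathcomp Require Import all_classical all_reals all_analysis.
Set Implicit Arguments. Unset Strict Implicit. Unset Printing Implicit Defensive.
Import Order.TTheory GRing.Theory Num.Theory.
Import numFieldNormedType.Exports.
Local Open Scope ring_scope.

Section Defs.
Variable R : realType.

Definition xval (beta theta delta : R) : R := beta * (theta + delta).

(* 1-based entries u_{i,j}, 1 <= i,j <= N-1 *)
Definition ucoef (N i : nat) : R := ((i * (N - i))%:R) / ((N ^ 2)%:R).
Definition uup (N : nat) (delta beta theta : R) (i : nat) : R :=
  ucoef N i * (1 + expR (- xval beta theta delta))^-1.
Definition udown (N : nat) (delta beta theta : R) (i : nat) : R :=
  ucoef N i * (1 + expR (xval beta theta delta))^-1.
Definition uentry (N : nat) (delta beta theta : R) (i j : nat) : R :=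
  if j == i.+1 then uup N delta beta theta i
  else if j.+1 == i then udown N delta beta theta i
  else if j == i then 1 - uup N delta beta theta i - udown N delta beta theta i
  else 0.

(* U as an (N-1)x(N-1) matrix; row/column index k : 'I_(N-1) stands for k+1 *)
Definition Umat (N : nat) (delta beta theta : R) : 'M[R]_(N.-1) :=
  \matrix_(i, j) uentry N delta beta theta i.+1 j.+1.

Definition Nmat (N : nat) (delta beta theta : R) : 'M[R]_(N.-1) :=
  invmx (1%:M - Umat N delta beta theta).

(* nat-indexed (0-based) access to a square matrix, 0 outside the range *)
Definition mxe (n : nat) (A : 'M[R]_n) (i j : nat) : R :=
  match (insub i : option 'I_n), (insub j : option 'I_n) with
  | Some i', Some j' => A i' j'
  | _, _ => 0
  end.

(* n_{ij}, 1-based, 1 <= i,j <= N-1 *)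
Definition nent (N : nat) (delta beta theta : R) (i j : nat) : R :=
  mxe (Nmat N delta beta theta) i.-1 j.-1.

Definition E_r (N : nat) (delta theta beta : R) : R :=
  theta / 2 * \sum_(1 <= i < N)
    (nent N delta beta theta 1 i + nent N delta beta theta N.-1 i) * i%:R.

Definition E_p (N : nat) (delta theta beta : R) : R :=
  theta / 2 * \sum_(1 <= i < N)
    (nent N delta beta theta 1 i + nent N delta beta theta N.-1 i) * (N - i)%:R.

Definition harm (N : nat) : R := \sum_(1 <= j < N) (j%:R)^-1.

End Defs.

From HB Require Import structures.
From mathcomp Require Import all_boot all_order all_algebra.
From mathcomp Require Import all_classical all_reals all_analysis.
From mathcomp Require Import zify ring lra.
Set Implicit Arguments. Unset Strict Implicit. Unset Printing Implicit Defensive.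
Import Order.TTheory GRing.Theory Num.Theory.
Import numFieldNormedType.Exports.
Local Open Scope classical_set_scope.
Local Open Scope ring_scope.

(* Write P = (1 + e^-x)^-1 and Q = (1 + e^x)^-1, so that U is the transition
   matrix of the birth-death chain on {1, ..., N-1} moving up with probability
   c_i P and down with probability c_i Q, where c_i = i (N - i) / N^2, the
   states 0 and N being absorbing.  As beta -> +oo, (P, Q) tends to (0, 1),
   (1/2, 1/2) or (1, 0) according to the sign of theta + delta.

   1. Matrix inversion is continuous at invertible matrices (adjugate
      formula), so the entries n_ij converge to those of the fundamental
      matrix of the limiting chain (p0, q0).
   2. That fundamental matrix is n_ab = G(a, b) / c_b for any Green function
      G of the limiting chain: G vanishes at b = 0, N and satisfies
      G(a, b) (p0 + q0) - G(a, b - 1) p0 - G(a, b + 1) q0 = [a = b].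
   3. Explicit Green functions: [a <= b] for the upward walk, [b <= a] for the
      downward walk, and the tent 2 min(a, b) (N - max(a, b)) / N for the
      symmetric walk.
   4. Since c_i = i (N - i) / N^2, the sums defining E_r and E_p reduce to
      harmonic sums, which gives the three cases of the theorem. *)

Section MatrixLimits.
Context {R : realType} {T : Type} (F : set_system T) {FF : Filter F}.

Lemma cvg_sum_nat m n (f : nat -> T -> R) (a : nat -> R) :
  (forall i, (m <= i < n)%N -> f i x @[x --> F] --> a i) ->
  \sum_(m <= i < n) f i x @[x --> F] --> \sum_(m <= i < n) a i.
Proof.
move=> cvgf; rewrite big_nat_cond; under eq_cvg do rewrite big_nat_cond.
by apply: (cvg_big add_continuous) => // i /andP[i_in _]; exact: cvgf.
Qed.

(* The determinant is a polynomial in the entries, hence it commutes with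
   entrywise limits. *)
Lemma cvg_det n (A : T -> 'M[R]_n) (B : 'M[R]_n) :
  (forall i j, A x i j @[x --> F] --> B i j) ->
  \det (A x) @[x --> F] --> \det B.
Proof.
move=> cvgA; apply: (cvg_big add_continuous) => // s _.
apply: cvgM; first exact: cvg_cst.
by apply: (cvg_big mul_continuous) => // i _; apply: cvgA.
Qed.

(* Matrix inversion is continuous at every invertible matrix: near the limit
   the matrices are invertible and their inverses are given by the adjugate
   formula, whose ingredients are determinants. *)
Lemma cvg_invmx n (A : T -> 'M[R]_n) (B : 'M[R]_n) :
  B \in unitmx ->
  (forall i j, A x i j @[x --> F] --> B i j) ->
  forall i j, invmx (A x) i j @[x --> F] --> invmx B i j.
Proof.
move=> unitB cvgA i j.
have detB_neq0 : \det B != 0 by rewrite -unitfE -unitmxE.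
have cvg_detA := cvg_det cvgA.
have unitA : \forall x \near F, A x \in unitmx.
  apply: filterS (cvgr_neq0 _ cvg_detA detB_neq0) => x.
  by rewrite unitmxE unitfE.
have cvg_cof : \adj (A x) i j @[x --> F] --> \adj B i j.
  rewrite !mxE; under eq_cvg do rewrite mxE.
  apply: cvgM; first exact: cvg_cst.
  by apply: cvg_det => k l; rewrite !mxE; under eq_cvg do rewrite !mxE; exact: cvgA.
rewrite /invmx unitB mxE.
apply: (@cvg_trans _ (((\det (A x))^-1 * \adj (A x) i j) @[x --> F])).
  apply: near_eq_cvg; near=> x.
  have unitAx : A x \in unitmx by near: x; exact: unitA.
  by rewrite unitAx [RHS]mxE.
by apply: cvgM; [exact: cvgV | exact: cvg_cof].
Unshelve. all: by end_near.
Qed.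

End MatrixLimits.

Lemma sum_nat_delta (R : pzSemiRingType) (m n k : nat) (f : nat -> R) :
  (m <= k < n)%N -> \sum_(m <= i < n) f i * (i == k)%:R = f k.
Proof.
move=> km; rewrite (bigD1_seq k) ?mem_index_iota ?iota_uniq //= eqxx mulr1.
by rewrite big1 ?addr0 // => i /negPf->; rewrite mulr0.
Qed.

Ltac decide_nat_eqs :=
  repeat match goal with
  | |- context [(?a == ?b)] =>
      first [ rewrite (_ : (a == b) = true); last by apply/eqP; lia
            | rewrite (_ : (a == b) = false); last by apply/negbTE/eqP; lia ]
  end.

Section BirthDeathChain.
Variables (R : realType) (N : nat).
Hypothesis N_gt0 : (0 < N)%N.

Local Notation c := (ucoef R N).

(* I - U for the chain on {1, ..., N-1} which moves up with probability c_i p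
   and down with probability c_i q; U of the statement is the case
   p = (1 + e^-x)^-1, q = (1 + e^x)^-1. *)
Definition ustep (p q : R) (i j : nat) : R :=
  if j == i.+1 then c i * p
  else if j.+1 == i then c i * q
  else if j == i then 1 - c i * p - c i * q
  else 0.

Definition Lmx (p q : R) : 'M[R]_(N.-1) :=
  1%:M - \matrix_(i, j) ustep p q i.+1 j.+1.

Definition Lcol (p q : R) (a b : nat) : R :=
  c b * (p + q) * (a == b)%:R - c b.-1 * p * (a.+1 == b)%:R
  - c b.+1 * q * (a == b.+1)%:R.

Lemma LmxE p q (k j : 'I_N.-1) : Lmx p q k j = Lcol p q k.+1 j.+1.
Proof.
rewrite !mxE /ustep /Lcol !eqSS -val_eqE /=.
have [->|ne_up] := eqVneq (j : nat) k.+1; first by decide_nat_eqs; rewrite /=; ring.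
have [->|ne_down] := eqVneq (k : nat) j.+1; first by decide_nat_eqs; rewrite /=; ring.
have [->|ne] := eqVneq (k : nat) j; decide_nat_eqs; rewrite /=; ring.
Qed.

Lemma ucoef_neq0 b : (0 < b < N)%N -> c b != 0.
Proof.
move=> /andP[b_gt0 b_ltN]; rewrite /ucoef mulf_neq0 ?invr_eq0 ?pnatr_eq0 //.
  by rewrite muln_eq0 negb_or -!lt0n b_gt0 subn_gt0.
by rewrite expn_eq0 negb_and -lt0n N_gt0.
Qed.

Lemma ucoef0 : c 0 = 0.
Proof. by rewrite /ucoef mul0n mul0r. Qed.

Lemma ucoefN : c N = 0.
Proof. by rewrite /ucoef subnn muln0 mul0r. Qed.

Lemma sum_interior (f : nat -> R) : f 0%N = 0 -> f N = 0 ->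
  \sum_(k < N.-1) f k.+1 = \sum_(0 <= k < N.+1) f k.
Proof.
move=> f0 fN; rewrite -(big_mkord xpredT (fun k => f k.+1)) big_nat_recl // f0 add0r.
by rewrite -[in RHS](prednK N_gt0) big_nat_recr //= prednK // fN addr0.
Qed.

Definition green (p q : R) (G : nat -> nat -> R) : Prop :=
  (forall a, (0 < a < N)%N -> G a 0%N = 0 /\ G a N = 0) /\
  (forall a b, (0 < a < N)%N -> (0 < b < N)%N ->
     G a b * (p + q) - G a b.-1 * p - G a b.+1 * q = (a == b)%:R).

Definition fund (G : nat -> nat -> R) (a b : nat) : R := G a b / c b.

Definition fundmx (G : nat -> nat -> R) : 'M[R]_(N.-1) :=
  \matrix_(a, b) fund G a.+1 b.+1.

Lemma fund_ucoef G a b r : (b <= N)%N -> G a 0%N = 0 -> G a N = 0 ->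
  fund G a b * (c b * r) = G a b * r.
Proof.
move=> b_leN G0 GN; rewrite /fund.
have [b_int|b_bnd] := boolP (0 < b < N)%N; first by rewrite mulrA divfK // ucoef_neq0.
have [->|->] : b = 0%N \/ b = N by lia.
all: by rewrite ?G0 ?GN !mul0r.
Qed.

(* If G is a Green function for (p, q), its fundamental matrix is a left
   inverse of I - U: the three-term recurrence is exactly row i of
   fundmx G *m (I - U) = I, the boundary terms vanishing with c_0 = c_N = 0. *)
Lemma fundmx_mulLmx p q G : green p q G -> fundmx G *m Lmx p q = 1%:M.
Proof.
move=> [G_bnd G_rec]; apply/matrixP => i j.
have i_int : (0 < i.+1 < N)%N by have := ltn_ord i; lia.
have j_int : (0 < j.+1 < N)%N by have := ltn_ord j; lia.
have [G0 GN] := G_bnd _ i_int.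
pose f k := fund G i.+1 k * Lcol p q k j.+1.
have fund0 : fund G i.+1 0%N = 0 by rewrite /fund ucoef0 invr0 mulr0.
have fundN : fund G i.+1 N = 0 by rewrite /fund ucoefN invr0 mulr0.
rewrite mxE (eq_bigr (fun k : 'I_N.-1 => f k.+1)); last by move=> k _; rewrite mxE LmxE.
rewrite sum_interior /f ?fund0 ?fundN ?mul0r //.
under eq_bigr do rewrite /Lcol eqSS !mulrBr !(mulrA _ _ (_ == _)%:R).
rewrite !sumrB !sum_nat_delta; try lia.
by rewrite !fund_ucoef ?G_rec ?mxE //; lia.
Qed.

Lemma Lmx_inverse p q G : green p q G ->
  Lmx p q \in unitmx /\ invmx (Lmx p q) = fundmx G.
Proof.
move=> G_green; have inv_left := fundmx_mulLmx G_green.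
have [_ unitL] := mulmx1_unit inv_left.
by split => //; rewrite -[invmx _]mul1mx -inv_left -mulmxA mulmxV // mulmx1.
Qed.

End BirthDeathChain.

Section GreenFunctions.
Variables (R : realType) (N : nat).

Lemma indicator_leq_ltn (m n : nat) :
  (m <= n)%N%:R - (m < n)%N%:R = (m == n)%:R :> R.
Proof. by rewrite leq_eqVlt; case: eqP => [->|_] /=; rewrite ?ltnn ?subr0 ?subrr. Qed.

(* When the chain only moves up (p, q) = (1, 0), state b is visited once
   from a exactly when a <= b < N. *)
Definition green_up (a b : nat) : R := (a <= b < N)%N%:R.

Lemma green_upP : green N 1 0 green_up.
Proof.
split=> [a /andP[a_gt0 a_ltN] | a b /andP[a_gt0 a_ltN]].
  by split; rewrite /green_up ?ltnn ?andbF // leqNgt a_gt0.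
case: b => // b /andP[_ b_ltN].
rewrite /green_up addr0 !mulr1 mulr0 subr0 b_ltN (ltnW b_ltN) !andbT /=.
exact: indicator_leq_ltn.
Qed.

Lemma green_up_ends i : (0 < i < N)%N ->
  green_up 1%N i + green_up N.-1 i = 1 + 1 * (i == N.-1)%:R.
Proof.
move=> /andP[i_gt0 i_ltN].
have ge_last : (N.-1 <= i)%N = (i == N.-1) by apply/idP/eqP; lia.
by rewrite /green_up i_gt0 i_ltN ge_last mul1r !andbT.
Qed.

(* When the chain only moves down (p, q) = (0, 1), state b is visited once
   from a exactly when 0 < b <= a. *)
Definition green_down (a b : nat) : R := (0 < b <= a)%N%:R.

Lemma green_downP : green N 0 1 green_down.
Proof.
split=> [a /andP[a_gt0 a_ltN] | a b /andP[a_gt0 a_ltN]].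
  by split; rewrite /green_down // (leqNgt N a) a_ltN andbF.
case: b => // b _.
rewrite /green_down add0r !mulr1 mulr0 subr0 /= eq_sym.
exact: indicator_leq_ltn.
Qed.

Lemma green_down_ends i : (0 < i < N)%N ->
  green_down 1%N i + green_down N.-1 i = 1 + 1 * (i == 1%N)%:R.
Proof.
move=> /andP[i_gt0 i_ltN].
have le_first : (i <= 1)%N = (i == 1%N) by apply/idP/eqP; lia.
have le_last : (i <= N.-1)%N by lia.
by rewrite /green_down i_gt0 le_first le_last mul1r addrC.
Qed.

Definition green_sym (a b : nat) : R :=
  2 / N%:R * ((minn a b)%:R * (N%:R - (maxn a b)%:R)).

Lemma green_symP : (0 < N)%N -> green N 2^-1 2^-1 green_sym.
Proof.
move=> N_gt0; have N_neq0 : N%:R != 0 :> R by rewrite pnatr_eq0 -lt0n.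
split=> [a /andP[a_gt0 a_ltN] | a b /andP[a_gt0 a_ltN]].
  rewrite /green_sym (minn_idPr (leq0n a)) (maxn_idPr (ltnW a_ltN)).
  by rewrite mul0r subrr !mulr0.
case: b => // b _; rewrite /green_sym /=.
case: (ltngtP a b.+1) => [a_lt_b1 | b_lt_a | ->] /=.
- have a_le_b : (a <= b)%N by rewrite -ltnS.
  have a_le_b2 : (a <= b.+2)%N by rewrite leqW // leqW.
  rewrite (minn_idPl a_le_b) (maxn_idPr a_le_b).
  rewrite (minn_idPl a_le_b2) (maxn_idPr a_le_b2).
  by field.
- have b_le_a : (b <= a)%N by rewrite ltnW // ltnW.
  rewrite (minn_idPr b_le_a) (maxn_idPl b_le_a).
  rewrite (minn_idPr b_lt_a) (maxn_idPl b_lt_a).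
  by field.
- rewrite (minn_idPr (leqnSn b)) (maxn_idPl (leqnSn b)).
  rewrite (minn_idPl (leqnSn b.+1)) (maxn_idPr (leqnSn b.+1)).
  by field.
Qed.

Lemma green_sym_ends i : (0 < i < N)%N ->
  green_sym 1%N i + green_sym N.-1 i = 2.
Proof.
move=> /andP[i_gt0 i_ltN].
have N_gt0 : (0 < N)%N by lia.
have N_neq0 : N%:R != 0 :> R by rewrite pnatr_eq0 -lt0n.
have i_le : (i <= N.-1)%N by lia.
rewrite /green_sym (minn_idPl i_gt0) (maxn_idPr i_gt0).
rewrite (minn_idPr i_le) (maxn_idPl i_le) -subn1 natrB //.
by field.
Qed.

End GreenFunctions.

Section Logistic.
Variable R : realType.

Definition pup (delta theta beta : R) : R := (1 + expR (- xval beta theta delta))^-1.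
Definition pdown (delta theta beta : R) : R := (1 + expR (xval beta theta delta))^-1.

(* Rewrites the down factor as a multiple of e^-y, to read off its limit. *)
Lemma logistic_flip (y : R) : (1 + expR y)^-1 = expR (- y) * (1 + expR (- y))^-1.
Proof.
have ey_gt0 : 0 < expR y := expR_gt0 y.
by rewrite expRN; field; rewrite !gt_eqF // addr_gt0.
Qed.

Lemma cvg_logistic (s : R) : 0 < s ->
  ((1 + expR (- (b * s)))^-1 @[b --> +oo] --> (1 : R))
  /\ ((1 + expR (b * s))^-1 @[b --> +oo] --> (0 : R)).
Proof.
move=> s_gt0.
have bs_cvg : b * s @[b --> +oo] --> +oo by apply: gt0_cvgMly => //; exact: cvg_id.
have e_cvg : expR (- (b * s)) @[b --> +oo] --> (0 : R).
  exact: (cvg_comp _ _ bs_cvg (@cvgr_expR R)).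
have up_cvg : (1 + expR (- (b * s)))^-1 @[b --> +oo] --> (1 : R).
  rewrite -[X in _ --> X]invr1; apply: cvgV; first exact: oner_neq0.
  by rewrite -[X in _ --> X]addr0; apply: cvgD => //; exact: cvg_cst.
split => //; have := cvgM e_cvg up_cvg; rewrite mul0r => down_cvg.
by under eq_cvg do rewrite logistic_flip; exact: down_cvg.
Qed.

Lemma cvg_pup_pdown_pos delta theta : 0 < theta + delta ->
  (pup delta theta b @[b --> +oo] --> (1 : R)) /\ (pdown delta theta b @[b --> +oo] --> (0 : R)).
Proof. exact: cvg_logistic. Qed.

Lemma cvg_pup_pdown_neg delta theta : theta + delta < 0 ->
  (pup delta theta b @[b --> +oo] --> (0 : R)) /\ (pdown delta theta b @[b --> +oo] --> (1 : R)).
Proof.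
rewrite -oppr_gt0 => /cvg_logistic[pdown_cvg pup_cvg]; rewrite /pup /pdown /xval.
split; first by under eq_cvg do rewrite -mulrN; exact: pup_cvg.
by under eq_cvg do rewrite -[_ * _]opprK -mulrN; exact: pdown_cvg.
Qed.

Lemma cvg_pup_pdown_crit delta theta : theta + delta = 0 ->
  (pup delta theta b @[b --> +oo] --> (2^-1 : R))
  /\ (pdown delta theta b @[b --> +oo] --> (2^-1 : R)).
Proof.
move=> crit; rewrite /pup /pdown /xval crit.
by split; under eq_cvg do rewrite mulr0 ?oppr0 expR0; exact: cvg_cst.
Qed.

End Logistic.

Section Summation.
Variables (R : realType) (N : nat).

Lemma sum_profile (w : nat -> R) c0 c1 k : (0 < k < N)%N ->
  \sum_(1 <= i < N) (c0 + c1 * (i == k)%:R) * w i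
  = c0 * \sum_(1 <= i < N) w i + c1 * w k.
Proof.
move=> k_int.
have split_term i : (c0 + c1 * (i == k)%:R) * w i = c0 * w i + c1 * (w i * (i == k)%:R).
  by ring.
by under eq_bigr do rewrite split_term; rewrite big_split -!mulr_sumr sum_nat_delta.
Qed.

Lemma harm_rev : \sum_(1 <= i < N) ((N - i)%N%:R)^-1 = harm R N.
Proof.
rewrite /harm big_nat_rev /=; apply: eq_big_nat => i /andP[i_ge1 i_ltN].
by congr (_%:R^-1); lia.
Qed.

Lemma fund_index (G : nat -> nat -> R) a i : (0 < i < N)%N ->
  fund N G a i * i%:R = G a i * ((N ^ 2)%:R / (N - i)%N%:R).
Proof.
move=> /andP[i_gt0 i_ltN]; rewrite /fund /ucoef natrM.
have i_neq0 : i%:R != 0 :> R by rewrite pnatr_eq0 -lt0n.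
have Ni_neq0 : (N - i)%N%:R != 0 :> R by rewrite pnatr_eq0 subn_eq0 -ltnNge.
have N_neq0 : N%:R != 0 :> R by rewrite pnatr_eq0; lia.
by field; rewrite i_neq0 Ni_neq0 N_neq0.
Qed.

Lemma fund_coindex (G : nat -> nat -> R) a i : (0 < i < N)%N ->
  fund N G a i * (N - i)%N%:R = G a i * ((N ^ 2)%:R / i%:R).
Proof.
move=> /andP[i_gt0 i_ltN]; rewrite /fund /ucoef natrM.
have i_neq0 : i%:R != 0 :> R by rewrite pnatr_eq0 -lt0n.
have Ni_neq0 : (N - i)%N%:R != 0 :> R by rewrite pnatr_eq0 subn_eq0 -ltnNge.
have N_neq0 : N%:R != 0 :> R by rewrite pnatr_eq0; lia.
by field; rewrite i_neq0 Ni_neq0 N_neq0.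
Qed.

Section EndRows.
Variables (G : nat -> nat -> R) (k : nat) (c0 c1 : R).
Hypothesis k_int : (0 < k < N)%N.
Hypothesis G_ends :
  forall i, (0 < i < N)%N -> G 1%N i + G N.-1 i = c0 + c1 * (i == k)%:R.

Lemma sum_ends_index :
  \sum_(1 <= i < N) (fund N G 1 i + fund N G N.-1 i) * i%:R
  = (N ^ 2)%:R * (c0 * harm R N + c1 / (N - k)%N%:R).
Proof.
have term i : (0 < i < N)%N -> (fund N G 1 i + fund N G N.-1 i) * i%:R
    = (c0 + c1 * (i == k)%:R) * ((N ^ 2)%:R / (N - i)%N%:R).
  by move=> i_int; rewrite mulrDl !fund_index // -mulrDl G_ends.
by rewrite (eq_big_nat _ _ term) sum_profile // -mulr_sumr harm_rev; ring.
Qed.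

Lemma sum_ends_coindex :
  \sum_(1 <= i < N) (fund N G 1 i + fund N G N.-1 i) * (N - i)%N%:R
  = (N ^ 2)%:R * (c0 * harm R N + c1 / k%:R).
Proof.
have term i : (0 < i < N)%N -> (fund N G 1 i + fund N G N.-1 i) * (N - i)%N%:R
    = (c0 + c1 * (i == k)%:R) * ((N ^ 2)%:R / i%:R).
  by move=> i_int; rewrite mulrDl !fund_coindex // -mulrDl G_ends.
by rewrite (eq_big_nat _ _ term) sum_profile // -mulr_sumr /harm; ring.
Qed.

End EndRows.

End Summation.

Section ExpectedTimes.
Variables (R : realType) (N : nat) (delta theta : R).
Hypothesis N_ge2 : (2 <= N)%N.

Let N_gt0 : (0 < N)%N. Proof. exact: ltnW. Qed.

Local Notation P beta := (pup delta theta beta).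
Local Notation Q beta := (pdown delta theta beta).

Lemma Nmat_Lmx beta : Nmat N delta beta theta = invmx (Lmx N (P beta) (Q beta)).
Proof. by []. Qed.

Lemma cvg_Lmx p0 q0 : P beta @[beta --> +oo] --> p0 -> Q beta @[beta --> +oo] --> q0 ->
  forall i j, Lmx N (P beta) (Q beta) i j @[beta --> +oo] --> Lmx N p0 q0 i j.
Proof.
move=> P_cvg Q_cvg i j; rewrite !mxE; under eq_cvg do rewrite !mxE.
apply: cvgB; first exact: cvg_cst.
have cP k : ucoef R N k * P b @[b --> +oo] --> ucoef R N k * p0.
  by apply: cvgM => //; exact: cvg_cst.
have cQ k : ucoef R N k * Q b @[b --> +oo] --> ucoef R N k * q0.
  by apply: cvgM => //; exact: cvg_cst.
rewrite /ustep; case: ifP => _; first exact: cP.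
case: ifP => _; first exact: cQ.
case: ifP => _; last exact: cvg_cst.
by apply: cvgB; [apply: cvgB; [exact: cvg_cst|]|].
Qed.

Lemma cvg_nent p0 q0 G : P beta @[beta --> +oo] --> p0 -> Q beta @[beta --> +oo] --> q0 ->
  green N p0 q0 G -> forall a b, (0 < a < N)%N -> (0 < b < N)%N ->
  nent N delta beta theta a b @[beta --> +oo] --> fund N G a b.
Proof.
move=> P_cvg Q_cvg G_green a b a_int b_int.
have [unitL invL] := Lmx_inverse N_gt0 G_green.
have a_lt : (a.-1 < N.-1)%N by lia.
have b_lt : (b.-1 < N.-1)%N by lia.
rewrite /nent /mxe insubT insubT /=; under eq_cvg do rewrite Nmat_Lmx.
have -> : fund N G a b = invmx (Lmx N p0 q0) (Ordinal a_lt) (Ordinal b_lt).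
  by rewrite invL mxE /= !prednK //; lia.
exact: cvg_invmx unitL (cvg_Lmx P_cvg Q_cvg) _ _.
Qed.

Lemma E_limits p0 q0 G k c0 c1 lr lp :
  P beta @[beta --> +oo] --> p0 -> Q beta @[beta --> +oo] --> q0 ->
  green N p0 q0 G -> (0 < k < N)%N ->
  (forall i, (0 < i < N)%N -> G 1%N i + G N.-1 i = c0 + c1 * (i == k)%:R) ->
  lr = theta / 2 * ((N ^ 2)%:R * (c0 * harm R N + c1 / (N - k)%N%:R)) ->
  lp = theta / 2 * ((N ^ 2)%:R * (c0 * harm R N + c1 / k%:R)) ->
  (E_r N delta theta beta @[beta --> +oo] --> lr)
  /\ (E_p N delta theta beta @[beta --> +oo] --> lp).
Proof.
move=> P_cvg Q_cvg G_green k_int G_ends -> ->.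
have ends_cvg i : (0 < i < N)%N ->
    nent N delta b theta 1 i + nent N delta b theta N.-1 i @[b --> +oo]
    --> fund N G 1 i + fund N G N.-1 i.
  by move=> i_int; apply: cvgD; apply: (cvg_nent P_cvg Q_cvg G_green) => //; lia.
rewrite -(sum_ends_index k_int G_ends) -(sum_ends_coindex k_int G_ends).
split; apply: cvgM; try exact: cvg_cst.
all: by apply: cvg_sum_nat => i i_int; apply: cvgM; [exact: ends_cvg | exact: cvg_cst].
Qed.

End ExpectedTimes.

Theorem theorem1 (R : realType) (N : nat) (delta theta : R) :
  (2 <= N)%N -> delta < 0 ->
  (E_r N delta theta beta @[beta --> +oo] -->
     (if theta < - delta then
        (N ^ 2)%:R * theta / 2 * ((N.-1)%:R^-1 + harm R N)
      else if theta == - delta then (N ^ 2)%:R * theta * harm R N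
      else (N ^ 2)%:R * theta / 2 * (1 + harm R N)))
  /\
  (E_p N delta theta beta @[beta --> +oo] -->
     (if theta < - delta then
        (N ^ 2)%:R * theta / 2 * (1 + harm R N)
      else if theta == - delta then (N ^ 2)%:R * theta * harm R N
      else (N ^ 2)%:R * theta / 2 * (harm R N + (N.-1)%:R^-1))).
Proof.
move=> N_ge2 _.
have first_int : (0 < 1 < N)%N by lia.
have last_int : (0 < N.-1 < N)%N by lia.
case: ltgtP => [sub | super | crit].
-
  have drift : theta + delta < 0 by lra.
  have [P_cvg Q_cvg] := cvg_pup_pdown_neg drift.
  apply: (E_limits N_ge2 P_cvg Q_cvg (green_downP R N) first_int (@green_down_ends R N)).
  + by rewrite subn1; ring.
  + by rewrite divr1; ring.
-
  have drift : 0 < theta + delta by lra.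
  have [P_cvg Q_cvg] := cvg_pup_pdown_pos drift.
  apply: (E_limits N_ge2 P_cvg Q_cvg (green_upP R N) last_int (@green_up_ends R N)).
  + by rewrite (_ : (N - N.-1)%N = 1%N); [rewrite divr1; ring | lia].
  + by ring.
-
  have no_drift : theta + delta = 0 by rewrite crit addNr.
  have [P_cvg Q_cvg] := cvg_pup_pdown_crit no_drift.
  apply: (E_limits N_ge2 P_cvg Q_cvg (green_symP R (ltnW N_ge2)) first_int (c1 := 0)).
  + by move=> i i_int; rewrite mul0r addr0 green_sym_ends.
  + by rewrite mul0r addr0; field.
  + by rewrite mul0r addr0; field.
Qed.
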